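(* Let $a,b,g,h>0$ with $a+b=g+h$. Then the input crank of the Minkowskian planar 4R linkage with these link lengths is a crank.
   Context: Link lengths: $a$ input crank, $b$ output crank, $g$ ground (fixed link), $h$ coupler. Put $T_1=g+b-h-a$, $T_2=a-g+b-h$, $T_3=g-a-b-h$, $T_4=g-a+b+h$. The input crank is a crank if $T_1T_2\ge0$ and $T_3T_4\le0$, a rocker if $T_1T_2<0$ and $T_3T_4\le0$, and a superrocker if $T_1T_2<0$ and $T_3T_4>0$. *)

From Stdlib Require Import Reals.
Open Scope R_scope.

(* Link lengths: a input crank, b output crank, g ground, h coupler. *)
Definition T1 (a b g h : R) : R := g + b - h - a.
Definition T2 (a b g h : R) : R := a - g + b - h.
Definition T3 (a b g h : R) : R := g - a - b - h.
Definition T4 (a b g h : R) : R := g - a + b + h.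

Definition input_is_crank (a b g h : R) : Prop :=
  0 <= T1 a b g h * T2 a b g h /\ T3 a b g h * T4 a b g h <= 0.
Definition input_is_rocker (a b g h : R) : Prop :=
  T1 a b g h * T2 a b g h < 0 /\ T3 a b g h * T4 a b g h <= 0.
Definition input_is_superrocker (a b g h : R) : Prop :=
  T1 a b g h * T2 a b g h < 0 /\ 0 < T3 a b g h * T4 a b g h.

(* The condition a + b = g + h says exactly that T2 vanishes, so T1 T2 = 0;
   moreover it turns T3 into -2h and T4 into 2b, whose product is negative. *)
From Stdlib Require Import Reals Lra.
Open Scope R_scope.

Lemma T2_eq0 (a b g h : R) : a + b = g + h -> T2 a b g h = 0.
Proof. unfold T2; lra. Qed.

Lemma T3_eq (a b g h : R) : a + b = g + h -> T3 a b g h = - (2 * h).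
Proof. unfold T3; lra. Qed.

Lemma T4_eq (a b g h : R) : a + b = g + h -> T4 a b g h = 2 * b.
Proof. unfold T4; lra. Qed.

Theorem mainTheorem18 (a b g h : R) :
  0 < a -> 0 < b -> 0 < g -> 0 < h -> a + b = g + h ->
  input_is_crank a b g h.
Proof.
  intros _ Hb _ Hh E; split.
  - rewrite (T2_eq0 _ _ _ _ E), Rmult_0_r; lra.
  - rewrite (T3_eq _ _ _ _ E), (T4_eq _ _ _ _ E).
    assert (0 <= (2 * h) * (2 * b)) by (apply Rmult_le_pos; lra).
    lra.
Qed.
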